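(* Let $\lambda$ be a cardinal with $\lambda^{\aleph_0}=\lambda$, let $(\mathscr T,\bar{\mathbf I})$ be a $\lambda^+$-complete tagged tree, and let $g:\mathscr T\to\lambda$. Then there is a tree $\mathscr T^\dagger$ with $(\mathscr T,\bar{\mathbf I})\le^*(\mathscr T^\dagger,\bar{\mathbf I})$ and a function $g^\dagger:\omega\to\lambda$ such that $g(\eta)=g^\dagger(\ell g(\eta))$ for all $\eta\in\mathscr T^\dagger$.
   Context: A tree is a nonempty set $\mathscr T$ of finite sequences of ordinals, closed under initial segments, such that every $\eta\in\mathscr T$ has at least one immediate successor in $\mathscr T$; $\mathrm{Succ}_{\mathscr T}(\eta)=\{\eta^\frown\langle\alpha\rangle:\eta^\frown\langle\alpha\rangle\in\mathscr T\}$; $\ell g(\eta)$ is the length of $\eta$. An ideal on a set $X$ is a family of subsets of $X$ containing all singletons, closed under subsets and finite unions, and not containing $X$; it is $\mu$-complete if closed under unions of fewer than $\mu$ members. A tagged tree is a pair $(\mathscr T,\bar{\mathbf I})$ where $\mathscr T$ is a tree and $\bar{\mathbf I}$ assigns to some (possibly all) $\eta\in\mathscr T$ an ideal $\mathbf I_\eta$ on a set $\mathrm{Dom}(\mathbf I_\eta)\supseteq\mathrm{Succ}_{\mathscr T}(\eta)$; it is $\mu$-complete if every defined $\mathbf I_\eta$ is $\mu$-complete. $\eta$ is a splitting point if $\mathbf I_\eta$ is defined and $\mathrm{Succ}_{\mathscr T}(\eta)\notin\mathbf I_\eta$. For trees $\mathscr T'\subseteq\mathscr T$, $(\mathscr T,\bar{\mathbf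 I})\le^*(\mathscr T',\bar{\mathbf I})$ means: for every $\eta\in\mathscr T'$ which is a splitting point of $(\mathscr T,\bar{\mathbf I})$ we have $\mathrm{Succ}_{\mathscr T'}(\eta)\notin\mathbf I_\eta$. *)

From Stdlib Require Import List.
Import ListNotations.

Definition is_tree {A : Type} (T : list A -> Prop) : Prop :=
  (exists eta, T eta) /\
  (forall eta nu : list A, T (eta ++ nu) -> T eta) /\
  (forall eta, T eta -> exists a : A, T (eta ++ [a])).

Definition Succ {A : Type} (T : list A -> Prop) (eta : list A) : list A -> Prop :=
  fun x => exists a : A, x = eta ++ [a] /\ T x.

Definition subset {X : Type} (P Q : X -> Prop) : Prop := forall x, P x -> Q x.

Definition is_ideal {X : Type} (D : X -> Prop) (I : (X -> Prop) -> Prop) : Prop :=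
  (forall Y, I Y -> subset Y D) /\
  (forall x, D x -> I (fun y => y = x)) /\
  (forall Y Z, I Z -> subset Y Z -> I Y) /\
  (forall Y Z, I Y -> I Z -> I (fun x => Y x \/ Z x)) /\
  ~ I D.

(* mu-complete with mu = lambda^+, lambda the cardinality of type L:
   closed under unions of families of size < lambda^+, i.e. of size
   <= lambda, i.e. indexed by a type J injecting into L. *)
Definition lambda_plus_complete {X : Type} (L : Type) (I : (X -> Prop) -> Prop) : Prop :=
  forall (J : Type) (f : J -> L), (forall j1 j2, f j1 = f j2 -> j1 = j2) ->
  forall F : J -> (X -> Prop), (forall j, I (F j)) ->
  I (fun x => exists j, F j x).

(* A tagged tree (T, Ibar): Ibar is given by
   - def eta : I_eta is defined,
   - Dom eta : the set Dom(I_eta),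
   - Id eta  : the ideal I_eta (a family of subsets of Dom eta).
   Only its values at defined eta in T matter. *)
Definition is_tagged_tree {A : Type} (T : list A -> Prop)
  (def : list A -> Prop) (Dom : list A -> list A -> Prop)
  (Id : list A -> (list A -> Prop) -> Prop) : Prop :=
  is_tree T /\
  forall eta, T eta -> def eta ->
    is_ideal (Dom eta) (Id eta) /\ subset (Succ T eta) (Dom eta).

Definition tagged_tree_complete {A : Type} (L : Type) (T : list A -> Prop)
  (def : list A -> Prop) (Id : list A -> (list A -> Prop) -> Prop) : Prop :=
  forall eta, T eta -> def eta -> lambda_plus_complete L (Id eta).

Definition splitting_point {A : Type} (T : list A -> Prop)
  (def : list A -> Prop) (Id : list A -> (list A -> Prop) -> Prop)
  (eta : list A) : Prop :=
  T eta /\ def eta /\ ~ Id eta (Succ T eta).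

Definition le_star {A : Type} (T : list A -> Prop)
  (def : list A -> Prop) (Id : list A -> (list A -> Prop) -> Prop)
  (T' : list A -> Prop) : Prop :=
  is_tree T' /\ subset T' T /\
  forall eta, T' eta -> splitting_point T def Id eta -> ~ Id eta (Succ T' eta).

Definition card_pow_omega_eq (L : Type) : Prop :=
  exists (f : (nat -> L) -> L) (h : L -> (nat -> L)),
    (forall s, h (f s) = s) /\ (forall x, f (h x) = x).

(* Fix a candidate h : nat -> L and play along T: one player must keep g η = h (ℓg η), the
   other may forbid at each node an I_η-small set of successors (nothing at non-splitting
   nodes). A refutation of h at η is a well-founded winning strategy of the second player.
   If h is unrefuted at the root, the nodes all of whose initial segments are unrefuted form
   T†, with g† = h.
   Otherwise every h is refuted at the root. There are only λ^ℵ0 = λ functions ω → λ, so by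
   λ⁺-completeness one successor dodges, at once, the forbidden sets of the refutations of
   all h consistent with the branch built so far; iterating gives a branch along which the
   refutation of the h read off that branch descends forever. *)

From Stdlib Require Import List Arith Lia Classical ClassicalEpsilon.
Import ListNotations.

Lemma is_tree_nil {B : Type} (S : list B -> Prop) : is_tree S -> S [].
Proof. intros [[eta Seta] [prefix_closed _]]. exact (prefix_closed [] eta Seta). Qed.

Lemma app_eq_snoc {B : Type} (p q eta : list B) (a : B) :
  p ++ q = eta ++ [a] -> (exists q', eta = p ++ q') \/ p = eta ++ [a].
Proof.
  intro E. induction q as [|b q' _] using rev_ind.
  - right. now rewrite app_nil_r in E.
  - left. exists q'. rewrite app_assoc in E. now apply app_inj_tail in E as [-> _].
Qed.

Lemma well_founded_no_descending_chain {X : Type} (R : X -> X -> Prop) :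
  well_founded R -> forall s : nat -> X, ~ (forall n, R (s (S n)) (s n)).
Proof.
  intros wf s descending.
  assert (no_visit : forall x, Acc R x -> forall n, s n = x -> False).
  { intros x acc. induction acc as [x _ IH]. intros n <-.
    exact (IH (s (S n)) (descending n) (S n) eq_refl). }
  exact (no_visit (s 0) (wf _) 0 eq_refl).
Qed.

Section Refutations.

Variables (A L : Type) (T : list A -> Prop) (def : list A -> Prop)
  (Dom : list A -> list A -> Prop) (Id : list A -> (list A -> Prop) -> Prop) (g : list A -> L).
Hypothesis tagged : is_tagged_tree T def Dom Id.

(* At non-splitting nodes I_η may be undefined or contain Succ(η), so nothing is small there. *)
Definition small (eta : list A) (Y : list A -> Prop) : Prop :=
  (splitting_point T def Id eta -> Id eta Y) /\
  (~ splitting_point T def Id eta -> forall x, ~ Y x).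

Lemma small_subset eta (Y Z : list A -> Prop) : small eta Z -> subset Y Z -> small eta Y.
Proof.
  intros [Zsplit Znonsplit] YZ. split.
  - intros split_eta. pose proof split_eta as (Teta & def_eta & _).
    destruct (proj2 tagged eta Teta def_eta) as [(_ & _ & down_closed & _) _].
    exact (down_closed Y Z (Zsplit split_eta) YZ).
  - intros nonsplit x Yx. exact (Znonsplit nonsplit x (YZ x Yx)).
Qed.

Lemma small_empty eta : T eta -> small eta (fun _ => False).
Proof.
  intros Teta. split; [|auto].
  intros (_ & def_eta & _).
  destruct (proj2 tagged eta Teta def_eta) as [(_ & singletons & down_closed & _) succ_in_dom].
  destruct (proj2 (proj2 (proj1 tagged)) eta Teta) as [a Ta].
  apply (down_closed _ (fun y => y = eta ++ [a])); [|intros x []].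
  apply singletons, succ_in_dom. exists a. auto.
Qed.

Lemma small_avoidable eta (Y : list A -> Prop) :
  T eta -> small eta Y -> exists a, T (eta ++ [a]) /\ ~ Y (eta ++ [a]).
Proof.
  intros Teta [Ysplit Ynonsplit].
  destruct (classic (splitting_point T def Id eta)) as [split_eta | nonsplit].
  - pose proof split_eta as (_ & def_eta & succ_large).
    destruct (proj2 tagged eta Teta def_eta) as [(_ & _ & down_closed & _) _].
    apply NNPP. intros no_escape. apply succ_large.
    apply (down_closed _ Y (Ysplit split_eta)).
    intros x [a [-> Ta]]. apply NNPP. intros nY. eauto.
  - destruct (proj2 (proj2 (proj1 tagged)) eta Teta) as [a Ta].
    exists a. split; [exact Ta | exact (Ynonsplit nonsplit _)].
Qed.

Lemma small_union (complete : tagged_tree_complete L T def Id) eta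
  (J : Type) (i : J -> L) (i_inj : forall j1 j2, i j1 = i j2 -> j1 = j2)
  (Y : J -> list A -> Prop) :
  (forall j, small eta (Y j)) -> small eta (fun x => exists j, Y j x).
Proof.
  intros Ysmall. split.
  - intros split_eta. pose proof split_eta as (Teta & def_eta & _).
    apply (complete eta Teta def_eta J i i_inj Y). intro j. exact (proj1 (Ysmall j) split_eta).
  - intros nonsplit x [j Yx]. exact (proj2 (Ysmall j) nonsplit x Yx).
Qed.

Inductive refutation (h : nat -> L) : list A -> Type :=
| refute_mismatch eta : g eta <> h (length eta) -> refutation h eta
| refute_small eta (Y : list A -> Prop) : small eta Y ->
    (forall a, T (eta ++ [a]) -> ~ Y (eta ++ [a]) -> refutation h (eta ++ [a])) ->
    refutation h eta.

Definition refutable (h : nat -> L) (eta : list A) : Prop := inhabited (refutation h eta).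

Lemma unrefuted_survives h eta : ~ refutable h eta ->
  g eta = h (length eta) /\
  forall Y, small eta Y ->
    exists a, T (eta ++ [a]) /\ ~ Y (eta ++ [a]) /\ ~ refutable h (eta ++ [a]).
Proof.
  intros unrefuted. split.
  - apply NNPP. intros mismatch. apply unrefuted. constructor. now apply refute_mismatch.
  - intros Y Ysmall. apply NNPP. intros no_escape. apply unrefuted. constructor.
    apply (refute_small h eta Y Ysmall). intros a Ta nY.
    refine (epsilon _ (fun _ => True)). apply NNPP. intros unrefuted_a. eauto.
Qed.

Definition unrefuted_subtree (h : nat -> L) (eta : list A) : Prop :=
  forall p q, eta = p ++ q -> T p /\ ~ refutable h p.

Lemma unrefuted_subtree_node h eta : unrefuted_subtree h eta -> T eta /\ ~ refutable h eta.
Proof. intros sub. apply (sub eta []). now rewrite app_nil_r. Qed.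

Lemma unrefuted_subtree_snoc h eta a : unrefuted_subtree h eta ->
  T (eta ++ [a]) -> ~ refutable h (eta ++ [a]) -> unrefuted_subtree h (eta ++ [a]).
Proof.
  intros sub Ta unrefuted p q E.
  destruct (app_eq_snoc p q eta a (eq_sym E)) as [[q' E'] | ->]; [exact (sub p q' E') | auto].
Qed.

Lemma unrefuted_root_subtree h : ~ refutable h [] ->
  le_star T def Id (unrefuted_subtree h) /\
  forall eta, unrefuted_subtree h eta -> g eta = h (length eta).
Proof.
  intros unrefuted_root.
  assert (escape : forall eta Y, unrefuted_subtree h eta -> small eta Y ->
            exists a, unrefuted_subtree h (eta ++ [a]) /\ ~ Y (eta ++ [a])).
  { intros eta Y sub Ysmall.
    destruct (unrefuted_subtree_node h eta sub) as [_ unrefuted].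
    destruct (proj2 (unrefuted_survives h eta unrefuted) Y Ysmall) as (a & Ta & nY & unrefuted_a).
    exists a. split; [now apply unrefuted_subtree_snoc | exact nY]. }
  split; [split; [split; [|split] | split] |].
  - exists []. intros p q E. symmetry in E. apply app_eq_nil in E as [-> _].
    split; [exact (is_tree_nil T (proj1 tagged)) | exact unrefuted_root].
  - intros eta nu sub p q ->. apply (sub p (q ++ nu)). symmetry. apply app_assoc.
  - intros eta sub.
    destruct (escape eta _ sub (small_empty eta (proj1 (unrefuted_subtree_node h eta sub))))
      as [a [sub_a _]].
    eauto.
  - intros eta sub. exact (proj1 (unrefuted_subtree_node h eta sub)).
  - intros eta sub split_eta succ_small.
    destruct (escape eta (Succ (unrefuted_subtree h) eta) sub) as [a [sub_a nY]].
    + split; [auto | contradiction].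
    + apply nY. exists a. auto.
  - intros eta sub. apply unrefuted_survives, unrefuted_subtree_node, sub.
Qed.

Definition obstacle {h eta} (d : refutation h eta) : list A -> Prop :=
  match d with
  | refute_mismatch _ _ _ => fun _ => False
  | refute_small _ _ Y _ _ => Y
  end.

Lemma obstacle_small h eta (d : refutation h eta) :
  g eta = h (length eta) -> small eta (obstacle d).
Proof. destruct d; simpl; [contradiction | auto]. Qed.

Definition refutation_child {h eta} (d : refutation h eta) a (E : g eta = h (length eta))
  (Ta : T (eta ++ [a])) (nY : ~ obstacle d (eta ++ [a])) : refutation h (eta ++ [a]) :=
  match d as d0 in refutation _ e return
    g e = h (length e) -> T (e ++ [a]) -> ~ obstacle d0 (e ++ [a]) -> refutation h (e ++ [a]) with
  | refute_mismatch _ _ mismatch => fun E _ _ => False_rect _ (mismatch E)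
  | refute_small _ _ _ _ F => fun _ Ta nY => F a Ta nY
  end E Ta nY.

Definition child_of h (y x : {eta & refutation h eta}) : Prop :=
  exists a E Ta nY, y = existT _ _ (refutation_child (projT2 x) a E Ta nY).

Lemma child_of_wf h : well_founded (child_of h).
Proof.
  intros [eta d]. induction d as [e mismatch | e Y Ysmall F IH];
    constructor; intros y (a & E & Ta & nY & ->); simpl in *.
  - contradiction.
  - apply IH.
Qed.

Definition agree (h : nat -> L) (eta : list A) : Prop :=
  forall k, k < length eta -> h k = g (firstn k eta).

Lemma agree_prefix {h eta a} : agree h (eta ++ [a]) -> agree h eta.
Proof.
  intros ag k lt_k. rewrite ag by (rewrite length_app; simpl; lia).
  rewrite firstn_app. replace (k - length eta) with 0 by lia. simpl. now rewrite app_nil_r.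
Qed.

Lemma agree_last {h eta a} : agree h (eta ++ [a]) -> g eta = h (length eta).
Proof.
  intros ag. rewrite ag by (rewrite length_app; simpl; lia).
  rewrite firstn_app, Nat.sub_diag, firstn_all. simpl. now rewrite app_nil_r.
Qed.

Lemma agree_snoc h eta a : agree h eta -> g eta = h (length eta) -> agree h (eta ++ [a]).
Proof.
  intros ag E k lt_k. rewrite length_app in lt_k. simpl in lt_k.
  rewrite firstn_app. destruct (Nat.eq_dec k (length eta)) as [-> | ne].
  - now rewrite Nat.sub_diag, firstn_all, app_nil_r.
  - replace (k - length eta) with 0 by lia. rewrite app_nil_r. apply ag. lia.
Qed.

Variable f : (nat -> L) -> L.
Hypothesis f_inj : forall s1 s2, f s1 = f s2 -> s1 = s2.
Hypothesis complete : tagged_tree_complete L T def Id.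

Record refuted_node := {
  rn_node : list A;
  rn_in : T rn_node;
  rn_refutation : forall h, agree h rn_node -> refutation h rn_node }.

Lemma refuted_node_escape (s : refuted_node) : exists a, T (rn_node s ++ [a]) /\
  forall h (p : agree h (rn_node s ++ [a])),
    ~ obstacle (rn_refutation s h (agree_prefix p)) (rn_node s ++ [a]).
Proof.
  destruct s as [eta Teta D]. simpl.
  set (Y := fun h x => exists p : agree h eta, g eta = h (length eta) /\ obstacle (D h p) x).
  assert (Ysmall : forall h, small eta (Y h)).
  { intros h.
    destruct (classic (exists p : agree h eta, g eta = h (length eta))) as [[p E] | inconsistent].
    - apply (small_subset eta _ _ (obstacle_small h eta (D h p) E)).
      intros x (p' & _ & Yx). now rewrite (proof_irrelevance _ p' p) in Yx.
    - apply (small_subset eta _ _ (small_empty eta Teta)).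
      intros x (p' & E & _). apply inconsistent. eauto. }
  destruct (small_avoidable eta _ Teta (small_union complete eta _ f f_inj Y Ysmall))
    as [a [Ta nY]].
  exists a. split; [exact Ta|].
  intros h p Yx. apply nY. exists h, (agree_prefix p). split; [exact (agree_last p) | exact Yx].
Qed.

Definition next_refuted_node (s : refuted_node) : refuted_node :=
  let esc := constructive_indefinite_description _ (refuted_node_escape s) in
  {| rn_node := rn_node s ++ [proj1_sig esc];
     rn_in := proj1 (proj2_sig esc);
     rn_refutation := fun h p =>
       refutation_child (rn_refutation s h (agree_prefix p)) _ (agree_last p)
         (proj1 (proj2_sig esc)) (proj2 (proj2_sig esc) h p) |}.

Lemma next_refuted_node_child s h
  (p : agree h (rn_node (next_refuted_node s))) (q : agree h (rn_node s)) :
  child_of h (existT _ _ (rn_refutation (next_refuted_node s) h p))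
             (existT _ _ (rn_refutation s h q)).
Proof.
  rewrite (proof_irrelevance _ q (agree_prefix p)).
  do 4 eexists. reflexivity.
Qed.

Lemma some_root_unrefuted : exists h, ~ refutable h [].
Proof.
  apply NNPP. intros all_refuted.
  assert (R : forall h, refutation h []).
  { intros h. refine (epsilon _ (fun _ => True)). apply NNPP. eauto. }
  set (root := {| rn_node := []; rn_in := is_tree_nil T (proj1 tagged);
                  rn_refutation := fun h _ => R h |}).
  set (branch := fun n => Nat.iter n next_refuted_node root).
  assert (branch_length : forall n, length (rn_node (branch n)) = n).
  { induction n as [|n IH]; [reflexivity|].
    change (branch (S n)) with (next_refuted_node (branch n)).
    simpl. rewrite length_app, IH. simpl. lia. }
  set (hs := fun k => g (rn_node (branch k))).
  assert (branch_agree : forall n, agree hs (rn_node (branch n))).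
  { induction n as [|n IH]; [intros k lt_k; simpl in lt_k; lia|].
    apply agree_snoc; [exact IH|]. unfold hs. now rewrite branch_length. }
  apply (well_founded_no_descending_chain (child_of hs) (child_of_wf hs)
           (fun n => existT _ _ (rn_refutation (branch n) hs (branch_agree n)))).
  intros n. apply next_refuted_node_child.
Qed.

End Refutations.

Theorem mainTheorem2 (A : Type) (L : Type)
  (T : list A -> Prop) (def : list A -> Prop) (Dom : list A -> list A -> Prop)
  (Id : list A -> (list A -> Prop) -> Prop) (g : list A -> L) :
  card_pow_omega_eq L ->
  is_tagged_tree T def Dom Id ->
  tagged_tree_complete L T def Id ->
  exists (Tdag : list A -> Prop) (gdag : nat -> L),
    le_star T def Id Tdag /\
    forall eta, Tdag eta -> g eta = gdag (length eta).
Proof.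
  intros [f [f_inv [f_cancel _]]] tagged complete.
  assert (f_inj : forall s1 s2, f s1 = f s2 -> s1 = s2).
  { intros s1 s2 E. now rewrite <- (f_cancel s1), <- (f_cancel s2), E. }
  destruct (some_root_unrefuted A L T def Dom Id g tagged f f_inj complete) as [h unrefuted].
  exists (unrefuted_subtree A L T def Id g h), h.
  exact (unrefuted_root_subtree A L T def Dom Id g tagged h unrefuted).
Qed.
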